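(* If $G$ is an oriented graph derived from a Burling tree $(T,r,\ell,c)$, then $G$ can be derived from a Burling tree $(T',r',\ell',c')$ such that, for every $v\in V(T')$, $v\in V(G)$ if and only if $v$ is neither the root nor a last-born of $T'$. Moreover, for every arc $uv$ of $G$, $uv$ is a top (resp. bottom) arc of $G$ with respect to $T$ if and only if it is a top (resp. bottom) arc of $G$ with respect to $T'$.
   Context: Oriented graphs are finite, without loops, multiple arcs or pairs of opposite arcs. In a rooted tree $T$ with root $r$, each non-root vertex $v$ has a parent $p(v)$; children, leaves, ancestors and descendants are as usual. A branch is a sequence $v_1\dots v_k$ ($k\ge0$) with $v_i$ the parent of $v_{i+1}$; it starts at $v_1$. A Burling tree is a 4-tuple $(T,r,\ell,c)$: $T$ a rooted tree with root $r$; $\ell$ assigns to each non-leaf vertex $v$ one of its children $\ell(v)$ (the last-born of $v$); $c$ assigns to every vertex $v$ that is neither the root nor a last-born the vertex-set of a (possibly empty) branch starting at $\ell(p(v))$, and $c(v)=\emptyset$ if $v$ is the root or a last-born. The oriented graph fully derived from it has vertex-set $V(T)$ and an arc $uv$ iff $v\in c(u)$; an oriented graph is derived from the Burling tree if it is an induced subgraph of the fully derived one (so $V(G)\subseteq V(T)$). If $G$ is derived from $T$ and $uv$ is an arc of $G$, then all out-neighbors of $u$ lie on one branch of $T$; $uv$ is a top arc with respect to $T$ if $v$ is the out-neighbor of $u$ closest in $T$ to the root, and a bottom arc with respect to $T$ if $v$ is the out-neighbor of $u$ furthest in $T$ from the root. *)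

From mathcomp Require Import all_boot.
Set Implicit Arguments. Unset Strict Implicit. Unset Printing Implicit Defensive.

(* Vertices are labelled by natural numbers (an unbounded supply of labels,
   so that a new Burling tree may use fresh vertices). *)

Record btree := BTree {
  bvert : seq nat;
  broot : nat;
  bpar  : nat -> nat;         (* parent p(v), meaningful for v in V(T), v <> r *)
  blb   : nat -> nat;         (* last-born l(v), meaningful for non-leaves *)
  bc    : nat -> seq nat      (* c(v), read as a vertex set *)
}.

Section Defs.
Variable T : btree.

Definition children (v : nat) : seq nat :=
  [seq w <- bvert T | (w != broot T) && (bpar T w == v)].

Definition is_leaf (v : nat) : bool := nilp (children v).

Definition is_last_born (w : nat) : bool :=
  [&& w \in bvert T, w != broot T & w == blb T (bpar T w)].

Definition rooted_tree : Prop :=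
  [/\ broot T \in bvert T,
      (forall v, v \in bvert T -> v != broot T -> bpar T v \in bvert T) &
      (forall v, v \in bvert T -> exists n, iter n (bpar T) v = broot T)].

Definition is_branch (s : seq nat) : Prop :=
  match s with
  | [::] => True
  | x :: s' => x \in bvert T /\ all (fun y => y \in bvert T) s' /\
               path (fun a b => (b != broot T) && (bpar T b == a)) x s'
  end.

Definition burling_tree : Prop :=
  [/\ rooted_tree,
      (forall v, v \in bvert T -> ~~ is_leaf v -> blb T v \in children v) &
      (forall v, v \in bvert T ->
         if (v == broot T) || is_last_born v then bc T v =i [::]
         else exists s : seq nat,
                [/\ is_branch s, (match s with [::] => True
                                  | x :: _ => x = blb T (bpar T v) end)
                  & bc T v =i s])].

Definition full_arc (u v : nat) : bool :=
  [&& u \in bvert T, v \in bvert T & v \in bc T u].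

Definition dist_root (v : nat) (n : nat) : Prop :=
  iter n (bpar T) v = broot T /\ forall m, m < n -> iter m (bpar T) v <> broot T.

End Defs.

Record ograph := OGraph { gvert : seq nat; garc : rel nat }.

Definition derived_from (G : ograph) (T : btree) : Prop :=
  {subset gvert G <= bvert T} /\
  forall u v, garc G u v <->
    [/\ u \in gvert G, v \in gvert G & full_arc T u v].

Definition top_arc (G : ograph) (T : btree) (u v : nat) : Prop :=
  garc G u v /\ forall w n m, garc G u w -> dist_root T v n -> dist_root T w m -> n <= m.

Definition bottom_arc (G : ograph) (T : btree) (u v : nat) : Prop :=
  garc G u v /\ forall w n m, garc G u w -> dist_root T v n -> dist_root T w m -> m <= n.

From mathcomp Require Import all_boot zify.
Set Implicit Arguments. Unset Strict Implicit. Unset Printing Implicit Defensive.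

(* Keep only the vertices of G and rebuild the tree around them.  Every vertex g of G,
   and a new root, carries a chain of new vertices hanging below it, each one the
   last-born of the previous one, so that the new vertices are exactly the root and the
   last-borns.  A vertex x of G of depth d(x) in T hangs from the chain of its nearest
   proper ancestor in G (the root chain if there is none), at new depth
   3 d(x) + [x is the root or a last-born of T].  The factor 3 leaves room for the
   last-born of p(u) to sit one level below its siblings u: it then hangs from the
   last-born of the new parent of u, which is therefore an ancestor of every out-neighbour
   of u, and c'(u) is the path from it down to the deepest out-neighbour of u.  Ancestry
   between vertices of G is the same in both trees and the new depth is strictly
   increasing along the branches of T, so the derived graph and its top and bottom arcs
   are the same. *)

Lemma exists_argmax_seq (I : eqType) (f : I -> nat) (s : seq I) : s != [::] ->
  exists2 t, t \in s & forall w, w \in s -> f w <= f t.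
Proof.
elim: s => // x [|y s] IH _; first by exists x => [|w]; rewrite inE // => /eqP ->.
have [t ts maxt] := IH isT; case: (leqP (f x) (f t)) => [lext | ltxt].
  by exists t => [|w]; rewrite inE ?ts ?orbT // => /predU1P[->|/maxt].
exists x => [|w]; first exact: mem_head.
by rewrite inE => /predU1P[->//|/maxt lewt]; apply: leq_trans lewt (ltnW ltxt).
Qed.

(** * Depth functions and ancestors *)

Lemma dist_root_uniq T x n m : dist_root T x n -> dist_root T x m -> n = m.
Proof. by move=> [en ltn] [em ltm]; case: (ltngtP n m) => [/ltm[] | /ltn[] |]. Qed.

Record depth_function (T : btree) (d : nat -> nat) : Prop := DepthFunction {
  depth0 : forall x, x \in bvert T -> (d x == 0) = (x == broot T);
  par_mem : forall x, x \in bvert T -> x != broot T -> bpar T x \in bvert T;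
  depth_par : forall x, x \in bvert T -> x != broot T -> d x = (d (bpar T x)).+1 }.

Section RootedDepth.
Variables (T : btree) (d : nat -> nat).
Local Notation V := (bvert T).
Local Notation r := (broot T).
Local Notation p := (bpar T).
Hypothesis dT : depth_function T d.

Lemma iter_par x k : x \in V -> k <= d x -> iter k p x \in V /\ d (iter k p x) = d x - k.
Proof.
move=> xV; elim: k => [|k IH] lekd; first by rewrite subn0.
have [yV dy] := IH (ltnW lekd).
have yr : iter k p x != r by rewrite -(depth0 dT) // dy subn_eq0 -ltnNge.
by rewrite iterS (par_mem dT) //; split=> //; move: (depth_par dT yV yr); lia.
Qed.

Lemma dist_root_depth x : x \in V -> dist_root T x (d x).
Proof.
move=> xV; split=> [|k ltk].
  by have [yV dy] := iter_par xV (leqnn _); apply/eqP; rewrite -(depth0 dT) // dy subnn.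
have [yV dy] := iter_par xV (ltnW ltk).
by apply/eqP; rewrite -(depth0 dT) // dy subn_eq0 -ltnNge.
Qed.

Lemma rooted_tree_depth : r \in V -> rooted_tree T.
Proof.
split=> // [|x xV]; first exact: par_mem dT.
by exists (d x); case: (dist_root_depth xV).
Qed.

Definition ancestors x := traject p x (d x).+1.

Lemma ancestors_self x : x \in ancestors x.
Proof. exact: mem_head. Qed.

Lemma ancestorsP x y : reflect (exists2 k, k <= d x & iter k p x = y) (y \in ancestors x).
Proof. by apply: (iffP trajectP) => -[k]; exists k. Qed.

Lemma ancestors_par x : x \in V -> x != r -> ancestors x = x :: ancestors (p x).
Proof. by move=> xV xr; rewrite /ancestors (depth_par dT). Qed.

Lemma ancestorP x y : x \in V -> y \in ancestors x ->
  [/\ y \in V, d y <= d x & iter (d x - d y) p x = y].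
Proof.
move=> xV /ancestorsP[k lekd <-]; have [yV dy] := iter_par xV lekd.
by rewrite dy leq_subr subKn.
Qed.

Lemma ancestors_trans x y z : x \in V -> y \in ancestors x -> z \in ancestors y ->
  z \in ancestors x.
Proof.
move=> xV /ancestorsP[k lekd <-] /ancestorsP[m lemd <-].
have [_ dy] := iter_par xV lekd.
by apply/ancestorsP; exists (m + k); rewrite ?iterD //; lia.
Qed.

Lemma ancestors_total x y z : x \in V -> y \in ancestors x -> z \in ancestors x ->
  d z <= d y -> z \in ancestors y.
Proof.
move=> xV /(ancestorP xV)[yV ledy ey] /(ancestorP xV)[zV ledz ez] lezy.
apply/ancestorsP; exists (d y - d z); first exact: leq_subr.
rewrite -[in RHS]ez -{2}ey -iterD; congr iter; lia.
Qed.

Lemma ancestor_depth_inj x y : x \in V -> y \in ancestors x -> d y = d x -> y = x.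
Proof. by move=> xV /(ancestorP xV)[_ _ e] dyx; rewrite -e dyx subnn. Qed.

Lemma mem_traject_par x k : x \in V -> k <= d x -> forall y,
  (y \in traject p x k.+1) = (y \in ancestors x) && (d x - k <= d y).
Proof.
move=> xV lekd y; apply/trajectP/andP => [[i ltik ->]|[/(ancestorP xV)[_ ledy ey] le]].
  have [_ di] := iter_par xV (leq_trans (ltnSE ltik) lekd).
  by split; [apply/ancestorsP; exists i => //; lia | rewrite di; lia].
by exists (d x - d y); [lia | rewrite ey].
Qed.

Lemma traject_branch x k : x \in V -> k <= d x -> is_branch T (rev (traject p x k.+1)).
Proof.
move=> xV; elim: k => [|k IH] lekd; first by [].
rewrite trajectSr rev_rcons; move: (IH (ltnW lekd)).
rewrite trajectSr rev_rcons => -[yV [allV pth]] /=.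
have [zV _] := iter_par xV lekd.
have yr : iter k p x != r by rewrite -(depth0 dT) //; have [_ ->] := iter_par xV (ltnW lekd); lia.
by rewrite -iterS zV yV allV yr eqxx.
Qed.

Lemma branch_traject x s : is_branch T (x :: s) ->
  [/\ last x s \in V, size s <= d (last x s) & x :: s = rev (traject p (last x s) (size s).+1)].
Proof.
elim: s x => [|y s IH] x /=.
  by move=> [xV _]; rewrite leq0n.
move=> [xV [/andP[yV allV] /andP[/andP[yr /eqP pyx] pth]]].
have [zV lesz e] := IH y (conj yV (conj allV pth)).
have ey : iter (size s) p (last y s) = y by move: e; rewrite trajectSr rev_rcons => -[].
have [_] := iter_par zV lesz; rewrite ey => dy.
have ltsz : size s < d (last y s) by move: (depth_par dT yV yr); lia.
have e' : x :: y :: s = rev (traject p (last y s) (size s).+2).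
  by rewrite trajectSr rev_rcons -e iterS ey pyx.
by split.
Qed.

Lemma mem_branch x s : is_branch T (x :: s) -> forall y,
  (y \in x :: s) = (y \in ancestors (last x s)) && (d x <= d y).
Proof.
move=> /branch_traject[zV lesz e].
have ex : iter (size s) p (last x s) = x by move: e; rewrite trajectSr rev_rcons => -[].
have [_] := iter_par zV lesz; rewrite ex => dx y.
by rewrite e mem_rev mem_traject_par // dx.
Qed.

Lemma mem_branch_inj x s y z : is_branch T (x :: s) -> y \in x :: s -> z \in x :: s ->
  d y = d z -> y = z.
Proof.
move=> br; have [lV _ _] := branch_traject br.
rewrite !(mem_branch br) => /andP[yl _] /andP[zl _] dyz.
apply: ancestor_depth_inj (ancestors_total lV zl yl _) _ => //; last by rewrite dyz.
by case: (ancestorP lV zl).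
Qed.

End RootedDepth.

Section TreeDepth.
Variable T : btree.
Hypothesis tree : rooted_tree T.
Local Notation V := (bvert T).
Local Notation r := (broot T).
Local Notation p := (bpar T).

Lemma tree_depth_subproof x : {n | x \in V -> dist_root T x n}.
Proof.
case xV: (x \in V); last by exists 0.
have ex : exists n, iter n p x == r.
  by case: tree => _ _ /(_ x xV)[n en]; exists n; apply/eqP.
exists (ex_minn ex) => _; case: ex_minnP => n /eqP en minn; split=> // m ltmn /eqP em.
by have := minn m em; rewrite leqNgt ltmn.
Qed.

Definition tree_depth x := sval (tree_depth_subproof x).

Lemma tree_depthP x : x \in V -> dist_root T x (tree_depth x).
Proof. exact: svalP (tree_depth_subproof x). Qed.

Lemma tree_depth_function : depth_function T tree_depth.
Proof.
have par_memT x : x \in V -> x != r -> p x \in V by case: tree => _ + _; apply.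
split=> // x xV.
  have [ex minx] := tree_depthP xV; apply/eqP/eqP => e; first by rewrite e in ex.
  by case: (tree_depth x) minx => // n /(_ 0 isT)[].
move=> xr; have [ep minp] := tree_depthP (par_memT x xV xr).
apply: dist_root_uniq (tree_depthP xV) _; split=> [|[|m] ltm]; first by rewrite iterSr.
  exact/eqP.
by rewrite iterSr; apply: minp.
Qed.

End TreeDepth.

Section ArcsByDepth.
Variables (G : ograph) (T : btree) (d : nat -> nat).
Hypotheses (dT : depth_function T d) (hG : derived_from G T).

Lemma arc_dist_root u v n : garc G u v -> dist_root T v n <-> n = d v.
Proof.
move=> uv; have [subGT arcs] := hG; have [_ /subGT vV _] := (arcs u v).1 uv.
have dv := dist_root_depth dT vV.
by split=> [/dist_root_uniq/(_ dv) | ->].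
Qed.

Lemma top_arcE u v :
  top_arc G T u v <-> garc G u v /\ forall w, garc G u w -> d v <= d w.
Proof.
split=> -[uv min_v]; split=> // w.
  by move=> uw; apply: (min_v w _ _ uw); [apply/(arc_dist_root _ uv) | apply/(arc_dist_root _ uw)].
by move=> n m uw /(arc_dist_root _ uv) -> /(arc_dist_root _ uw) ->; apply: min_v.
Qed.

Lemma bottom_arcE u v :
  bottom_arc G T u v <-> garc G u v /\ forall w, garc G u w -> d w <= d v.
Proof.
split=> -[uv max_v]; split=> // w.
  by move=> uw; apply: (max_v w _ _ uw); [apply/(arc_dist_root _ uv) | apply/(arc_dist_root _ uw)].
by move=> n m uw /(arc_dist_root _ uv) -> /(arc_dist_root _ uw) ->; apply: max_v.
Qed.

End ArcsByDepth.

(** * Burling trees *)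

Section BurlingTree.
Variable T : btree.
Hypothesis hT : burling_tree T.
Local Notation V := (bvert T).
Local Notation r := (broot T).
Local Notation p := (bpar T).
Local Notation lb := (blb T).

Lemma last_born_par u : u \in V -> u != r ->
  [/\ lb (p u) \in V, lb (p u) != r, p (lb (p u)) = p u & is_last_born T (lb (p u))].
Proof.
move=> uV ur; case: hT => -[_ par_memT _] lb_child _.
have puV := par_memT u uV ur.
have : lb (p u) \in children T (p u).
  apply: lb_child => //; apply/nilP => no_child.
  have : u \in children T (p u) by rewrite mem_filter ur eqxx uV.
  by rewrite no_child.
rewrite mem_filter => /andP[/andP[lbr /eqP plb] lbV].
by split=> //; rewrite /is_last_born lbV lbr plb eqxx.
Qed.

Lemma bc_branch u v : u \in V -> v \in bc T u ->
  [/\ u != r, ~~ is_last_born T u &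
      exists s, is_branch T (lb (p u) :: s) /\ bc T u =i lb (p u) :: s].
Proof.
move=> uV vc; case: hT => _ _ /(_ u uV).
case: ifP => [_ /(_ v) | /negbT]; first by rewrite vc.
rewrite negb_or => /andP[ur nlb] [[|x s] [br hx e]]; first by rewrite e in vc.
by split=> //; exists s; rewrite -hx.
Qed.

End BurlingTree.

(** * The new Burling tree *)

Section Construction.
Variables (T : btree) (G : ograph).
Hypotheses (hT : burling_tree T) (hG : derived_from G T).
Local Notation V := (bvert T).
Local Notation r := (broot T).
Local Notation p := (bpar T).
Local Notation lb := (blb T).
Local Notation inG x := (x \in gvert G).

Let tree : rooted_tree T := let: And3 tree _ _ := hT in tree.
Local Notation dep := (tree_depth tree).
Local Notation anc := (ancestors T dep).
Let dT : depth_function T dep := tree_depth_function tree.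

Lemma G_mem x : inG x -> x \in V.
Proof. by case: hG => + _; apply. Qed.

Lemma arcP u v : garc G u v <-> [/\ inG u, inG v & v \in bc T u].
Proof.
case: hG => subGT ->; split=> -[uG vG].
  by case/and3P.
by move=> vc; rewrite /full_arc !subGT.
Qed.

Lemma out_branch u w : garc G u w ->
  [/\ u != r, ~~ is_last_born T u & exists s, is_branch T (lb (p u) :: s) /\
      forall v, garc G u v <-> inG v /\ v \in lb (p u) :: s].
Proof.
move=> /arcP[uG _ wc]; have [ur nlb [s [br e]]] := bc_branch hT (G_mem uG) wc.
split=> //; exists s; split=> // v; rewrite arcP -e.
by split=> [[]|[]].
Qed.

Lemma arc_lb_ancestor u v : garc G u v -> lb (p u) \in anc v.
Proof.
move=> uv; have [_ _ [s [br arcs]]] := out_branch uv.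
have [_] := (arcs v).1 uv; rewrite (mem_branch dT br) => /andP[vz lev].
have := mem_head (lb (p u)) s; rewrite (mem_branch dT br) leqnn andbT => lbz.
have [zV _ _] := branch_traject dT br.
by apply: (ancestors_total dT zV).
Qed.

Definition root_or_lb x := (x == r) || is_last_born T x.
(* the depth in the new tree of a vertex x of G *)
Definition sdep x := 3 * dep x + root_or_lb x.
(* the chain below the nearest ancestor of x in G, or the root chain if there is none *)
Definition chain_of x := head 0 [seq g.+1 | g <- anc x & inG g].

Lemma sdep_par x : x \in V -> x != r -> sdep x = 3 * dep (p x) + 3 + root_or_lb x.
Proof. by move=> xV xr; rewrite /sdep (depth_par dT xV xr); lia. Qed.

Lemma sdep_bounds x : 3 * dep x <= sdep x <= 3 * dep x + 1.
Proof. by rewrite /sdep; case: (root_or_lb x); lia. Qed.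

Lemma sdep_gt0 x : x \in V -> 0 < sdep x.
Proof.
move=> xV; have [-> | xr] := eqVneq x r; first by rewrite /sdep /root_or_lb eqxx; lia.
by rewrite sdep_par //; lia.
Qed.

Lemma sdep_ancestor_lt x g : x \in V -> x != r -> g \in anc (p x) -> sdep g < (sdep x).-1.
Proof.
move=> xV xr /(ancestorP dT (par_mem dT xV xr))[_ le _].
by move: (sdep_bounds g) (sdep_par xV xr); case: (root_or_lb x); lia.
Qed.

Lemma chain_ofP x : x \in V ->
  chain_of x = 0 \/ exists2 g, chain_of x = g.+1 & inG g /\ g \in anc x.
Proof.
rewrite /chain_of; case E: [seq g <- anc x | inG g] => [|g s] _; [left | right] => //.
by exists g => //; apply/andP; rewrite -mem_filter E mem_head.
Qed.

Lemma chain_of_par x : x \in V -> x != r -> chain_of x = if inG x then x.+1 else chain_of (p x).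
Proof. by move=> xV xr; rewrite /chain_of (ancestors_par dT xV xr) /=; case: ifP. Qed.

Lemma chain_of_G g : inG g -> chain_of g = g.+1.
Proof. by rewrite /chain_of /ancestors /= => ->. Qed.

(* Labels below [fresh] are the old vertices, of which only those of G are kept; [node c i]
   is the vertex at depth [i] of chain [c], where chain [0] descends from [root'] and chain
   [g.+1] descends from [g], starting at depth [sdep g + 1]. *)
Definition fresh := (\max_(x <- V) x).+1.
Definition span := 3 * (\max_(x <- V) dep x) + 3.
Definition node c i := fresh + (c * span + i).
Definition chain x := (x - fresh) %/ span.
Definition index x := (x - fresh) %% span.

Definition root' := node 0 0.
Definition depth' x := if x < fresh then sdep x else index x.
Definition attach x := node (chain_of (p x)) (sdep x).-1.
Definition par' x :=
  if x < fresh then (if x == r then root' else attach x)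
  else if chain x is g.+1 then (if index x == (sdep g).+1 then g else node g.+1 (index x).-1)
  else node 0 (index x).-1.
Definition lastborn' x :=
  if x < fresh then node x.+1 (sdep x).+1 else node (chain x) (index x).+1.
Definition vertex' x := if x < fresh then inG x
  else if chain x is g.+1 then inG g && (sdep g < index x) else true.
Definition verts' := [seq x <- iota 0 (node fresh.+1 0) | vertex' x].
Definition out_nbrs u := [seq w <- gvert G | garc G u w].
Definition c' u := [seq x <- verts' | (lastborn' (par' u) \in traject par' x (depth' x).+1) &&
                                     has (fun w => x \in traject par' w (depth' w).+1) (out_nbrs u)].
Definition T' := BTree verts' root' par' lastborn' c'.

Lemma mem_lt_fresh x : x \in V -> x < fresh.
Proof. by move=> xV; rewrite ltnS (leq_bigmax_seq x). Qed.

Lemma G_lt_fresh x : inG x -> x < fresh.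
Proof. by move/G_mem/mem_lt_fresh. Qed.

Lemma sdep_lt_span x : x \in V -> (sdep x).+1 < span.
Proof.
move=> xV; have : dep x <= \max_(y <- V) dep y by exact: leq_bigmax_seq.
by move: (sdep_bounds x); rewrite /span; lia.
Qed.

Lemma span_gt1 : 1 < span.
Proof. by rewrite /span; lia. Qed.

Lemma node_lt c i : (node c i < fresh) = false.
Proof. by rewrite /node; lia. Qed.

Lemma chain_node c i : i < span -> chain (node c i) = c.
Proof.
move=> ltis; rewrite /chain /node addKn divnMDl ?divn_small ?addn0 //.
exact: ltnW span_gt1.
Qed.

Lemma index_node c i : i < span -> index (node c i) = i.
Proof. by move=> ltis; rewrite /index /node addKn modnMDl modn_small. Qed.

Variant label_spec x : Prop :=
  | LabelOld of x < fresh
  | LabelNode c i of i < span & x = node c i.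

Lemma labelP x : label_spec x.
Proof.
case: (ltnP x fresh) => [|lex]; first exact: LabelOld.
apply: (LabelNode (c := chain x) (i := index x)); first by rewrite /index ltn_mod ltnW // span_gt1.
by rewrite /node /chain /index -divn_eq subnKC.
Qed.

Section NodeLabels.
Variables (c i : nat).
Hypothesis ltis : i < span.

Lemma depth'_node : depth' (node c i) = i.
Proof. by rewrite /depth' node_lt index_node. Qed.

Lemma vertex'_node : vertex' (node c i) = if c is g.+1 then inG g && (sdep g < i) else true.
Proof. by rewrite /vertex' node_lt chain_node // index_node. Qed.

Lemma par'_node : par' (node c i) =
  if c is g.+1 then (if i == (sdep g).+1 then g else node g.+1 i.-1) else node 0 i.-1.
Proof. by rewrite /par' node_lt chain_node // index_node. Qed.

Lemma lastborn'_node : lastborn' (node c i) = node c i.+1.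
Proof. by rewrite /lastborn' node_lt chain_node // index_node. Qed.

End NodeLabels.

Lemma node_inj c i c' j : i < span -> j < span -> (node c i == node c' j) = (c == c') && (i == j).
Proof.
move=> ltis ltjs; apply/eqP/andP => [e | [/eqP-> /eqP->] //].
move: (congr1 chain e) (congr1 index e).
by rewrite !chain_node ?index_node // => -> ->; rewrite !eqxx.
Qed.

Lemma sdep_root : sdep r = 1.
Proof.
have rV : r \in V by case: tree.
have dr : dep r = 0 by apply/eqP; rewrite (depth0 dT) ?eqxx.
by rewrite /sdep /root_or_lb eqxx dr.
Qed.

Lemma vertex'_G x : inG x -> vertex' x.
Proof. by move=> xG; rewrite /vertex' G_lt_fresh. Qed.

Lemma depth'_G x : inG x -> depth' x = sdep x.
Proof. by move=> xG; rewrite /depth' G_lt_fresh. Qed.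

Lemma par'_G x : x < fresh -> x != r -> par' x = attach x.
Proof. by rewrite /par' => -> /negbTE ->. Qed.

Lemma vertex'_attach y : y \in V -> y != r -> vertex' (attach y) /\ depth' (attach y) = (sdep y).-1.
Proof.
move=> yV yr; have ltis : (sdep y).-1 < span by move: (sdep_lt_span yV); lia.
rewrite /attach vertex'_node // depth'_node //; split=> //.
case: (chain_ofP (par_mem dT yV yr)) => [-> | [g -> [gG ganc]]] //.
by rewrite gG (sdep_ancestor_lt yV yr ganc).
Qed.

Lemma par'_step x : vertex' x -> x != root' ->
  vertex' (par' x) /\ depth' (par' x) = (depth' x).-1.
Proof.
case: (labelP x) => [xlt | c i ltis ->].
  move=> vx _; have xG : inG x by move: vx; rewrite /vertex' xlt.
  rewrite (depth'_G xG); have [xr | xr] := eqVneq x r.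
    rewrite /par' xlt xr eqxx sdep_root.
    by rewrite vertex'_node ?depth'_node // ltnW // span_gt1.
  by rewrite par'_G //; exact: vertex'_attach (G_mem xG) xr.
rewrite vertex'_node // par'_node // depth'_node //.
case: c => [_ | g /andP[gG ltgi]] ne.
  have i0 : i != 0 by apply: contraNneq ne => ->.
  by rewrite vertex'_node ?depth'_node //; lia.
case: eqP => [-> | nei]; first by rewrite vertex'_G ?depth'_G.
by rewrite vertex'_node ?depth'_node ?gG //; lia.
Qed.

Lemma depth'0 x : vertex' x -> (depth' x == 0) = (x == root').
Proof.
case: (labelP x) => [xlt | c i ltis ->].
  move=> vx; have xG : inG x by move: vx; rewrite /vertex' xlt.
  rewrite depth'_G // gtn_eqF ?sdep_gt0 ?G_mem //.
  by apply/esym/negbTE; apply: contraTneq xlt => ->; rewrite node_lt.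
rewrite vertex'_node // depth'_node // /root' node_inj ?(ltnW span_gt1) //.
by case: c => [|g /andP[_ ltgi]] //=; case: i ltgi ltis.
Qed.

Lemma mem_verts' x : (x \in bvert T') = vertex' x.
Proof.
rewrite mem_filter mem_iota leq0n add0n; apply: andb_idr.
case: (labelP x) => [xlt _ | c i ltis ->]; first by rewrite /node; lia.
rewrite vertex'_node // => vc; have : c <= fresh by case: c vc => // g /andP[/G_lt_fresh].
by rewrite /node; nia.
Qed.

Lemma depth'_function : depth_function T' depth'.
Proof.
split=> x; rewrite !mem_verts' => vx; first exact: depth'0.
  by move=> xr; case: (par'_step vx xr).
move=> xr; case: (par'_step vx xr) => _ ->.
by move: (depth'0 vx); rewrite (negbTE xr); case: (depth' x).
Qed.

Local Notation anc' := (ancestors T' depth').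
Let dT' := depth'_function.

Lemma climb_chain c i j : i < span -> j <= i -> vertex' (node c j) ->
  iter (i - j) par' (node c i) = node c j.
Proof.
move=> ltis leji; rewrite vertex'_node ?(leq_ltn_trans leji) // => vcj.
have step n : j + n.+1 < span -> par' (node c (j + n.+1)) = node c (j + n).
  move=> lt; rewrite par'_node // addnS.
  by case: c vcj => [//|g /andP[_ ltgj]]; rewrite ifN_eq //; lia.
suff : forall n, j + n < span -> iter n par' (node c (j + n)) = node c j.
  by move/(_ (i - j)); rewrite subnKC //; apply.
elim=> [|n IH] lt; first by rewrite addn0.
by rewrite iterSr step // IH //; lia.
Qed.

Lemma climb_chain_top g i : inG g -> sdep g < i -> i < span ->
  iter (i - sdep g) par' (node g.+1 i) = g.
Proof.
move=> gG ltgi ltis; have -> : i - sdep g = (i - (sdep g).+1).+1 by lia.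
by rewrite iterS climb_chain // ?vertex'_node ?gG ?leqnn ?par'_node ?eqxx // (leq_ltn_trans _ ltis).
Qed.

Lemma attach_climb_G z : z \in V -> z != r -> inG (p z) ->
  iter ((sdep z).-1 - sdep (p z)) par' (attach z) = p z.
Proof.
move=> zV zr pzG; rewrite /attach chain_of_G //.
apply: climb_chain_top => //; first by move: (sdep_bounds (p z)) (sdep_par zV zr); lia.
by move: (sdep_lt_span zV); lia.
Qed.

Lemma attach_climb_attach z : z \in V -> z != r -> p z != r -> ~~ inG (p z) ->
  iter ((sdep z).-1 - (sdep (p z)).-1) par' (attach z) = attach (p z).
Proof.
move=> zV zr pzr pzG; have pzV := par_mem dT zV zr.
rewrite {1}/attach (chain_of_par pzV pzr) (negbTE pzG).
apply: climb_chain; first by move: (sdep_lt_span zV); lia.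
  by move: (sdep_bounds (p z)) (sdep_par zV zr); lia.
exact: (vertex'_attach pzV pzr).1.
Qed.

Lemma climb_attach t k : inG t -> k < dep t ->
  iter (sdep t - (sdep (iter k p t)).-1) par' t = attach (iter k p t).
Proof.
move=> tG; have tV := G_mem tG.
elim: k => [|k IH] ltk.
  have tr : t != r by rewrite -(depth0 dT) // -lt0n.
  have -> : sdep t - (sdep t).-1 = 1 by move: (sdep_gt0 tV); lia.
  by rewrite /= par'_G ?G_lt_fresh.
have [zV dz] := iter_par dT tV (ltnW (ltnW ltk)).
have [yV dy] := iter_par dT tV (ltnW ltk).
move: (IH (ltnW ltk)) zV dz yV dy; rewrite iterS; set z := iter k p t => hz zV dz yV dy.
have zr : z != r by rewrite -(depth0 dT) // dz; lia.
have yr : p z != r by rewrite -(depth0 dT) // dy; lia.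
have ledz : (sdep z).-1 <= sdep t by move: (sdep_bounds z) (sdep_bounds t) dz; lia.
have [yG | yG] := boolP (inG (p z)).
  have -> : attach (p z) = iter ((sdep z).-1 - sdep (p z) + (sdep t - (sdep z).-1)).+1 par' t.
    by rewrite iterS iterD hz attach_climb_G // par'_G ?G_lt_fresh.
  by congr iter; move: (sdep_bounds (p z)) (sdep_par zV zr) (sdep_gt0 yV) ledz; lia.
have -> : attach (p z) = iter ((sdep z).-1 - (sdep (p z)).-1 + (sdep t - (sdep z).-1)) par' t.
  by rewrite iterD hz attach_climb_attach.
by congr iter; move: (sdep_bounds (p z)) (sdep_par zV zr) ledz; lia.
Qed.

Lemma climb_G t g : inG t -> inG g -> g \in anc t -> iter (sdep t - sdep g) par' t = g.
Proof.
move=> tG gG /ancestorsP[[|k] lek ek]; first by rewrite -ek subnn.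
have tV := G_mem tG; have [zV dz] := iter_par dT tV (ltnW lek).
move: gG zV dz; rewrite -ek iterS; set z := iter k p t => gG zV dz.
have zr : z != r by rewrite -(depth0 dT) // dz; lia.
suff -> : sdep t - sdep (p z) = (sdep z).-1 - sdep (p z) + (sdep t - (sdep z).-1).
  by rewrite iterD climb_attach // attach_climb_G.
by move: (sdep_bounds (p z)) (sdep_par zV zr) (sdep_bounds z) (sdep_bounds t) dz; lia.
Qed.

Lemma anc'_attach t y : inG t -> y \in anc t -> y != r -> attach y \in anc' t.
Proof.
move=> tG /ancestorsP[k lek ey] yr; have tV := G_mem tG.
have ltk : k < dep t.
  rewrite ltn_neqAle lek andbT; apply: contraNneq yr => ek.
  by rewrite -ey ek (dist_root_depth dT tV).1.
apply/ancestorsP; exists (sdep t - (sdep y).-1); first by rewrite depth'_G // leq_subr.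
by rewrite -ey; exact: climb_attach.
Qed.

Lemma anc'_G t g : inG t -> inG g -> g \in anc t -> g \in anc' t.
Proof.
move=> tG gG gt; apply/ancestorsP; exists (sdep t - sdep g); first by rewrite depth'_G // leq_subr.
exact: climb_G.
Qed.

(* x is a T-ancestor of w, or lies on the root chain or on the chain of a T-ancestor of w *)
Definition on_lineage w x :=
  if x < fresh then x \in anc w else if chain x is g.+1 then g \in anc w else true.

Lemma on_lineage_par' w x : inG w -> vertex' x -> x != root' ->
  on_lineage w x -> on_lineage w (par' x).
Proof.
move=> wG; have wV := G_mem wG.
case: (labelP x) => [xlt | c i ltis ->].
  move=> vx _; have xG : inG x by move: vx; rewrite /vertex' xlt.
  have xV := G_mem xG; rewrite /on_lineage xlt => xw.
  have [xr | xr] := eqVneq x r.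
    by rewrite /par' xlt xr eqxx /root' node_lt chain_node // ltnW // span_gt1.
  have ltis : (sdep x).-1 < span by move: (sdep_lt_span xV); lia.
  rewrite par'_G // /attach node_lt chain_node //.
  case: (chain_ofP (par_mem dT xV xr)) => [-> // | [g -> [_ gpx]]].
  by apply: (ancestors_trans dT wV xw); rewrite (ancestors_par dT xV xr) inE gpx orbT.
rewrite vertex'_node // par'_node // /on_lineage node_lt chain_node //.
have ltis' : i.-1 < span by lia.
case: c => [_ _ _ | g /andP[gG _] _ gw]; first by rewrite node_lt chain_node.
by case: eqP => _; rewrite ?node_lt ?chain_node // G_lt_fresh.
Qed.

Lemma anc'_anc v w : inG v -> inG w -> v \in anc' w -> v \in anc w.
Proof.
move=> vG wG /ancestorsP[k lek ek]; have wV' : w \in bvert T' by rewrite mem_verts' vertex'_G.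
suff : on_lineage w (iter k par' w) by rewrite /on_lineage ek G_lt_fresh.
elim: k lek {ek} => [|k IH] lek; first by rewrite /on_lineage G_lt_fresh // ancestors_self.
have [xV' dx] := iter_par dT' wV' (ltnW lek).
rewrite iterS; apply: on_lineage_par' (IH (ltnW lek)) => //; first by rewrite -mem_verts'.
by rewrite -(depth0 dT') // dx; lia.
Qed.

Lemma lastborn'_par'_G u : inG u -> u != r -> ~~ is_last_born T u ->
  lastborn' (par' u) = attach (lb (p u)).
Proof.
move=> uG ur nlb; have uV := G_mem uG.
have [lbV lbr plb islb] := last_born_par hT uV ur.
have ltis : (sdep u).-1 < span by move: (sdep_lt_span uV); lia.
rewrite par'_G ?G_lt_fresh // {1}/attach lastborn'_node // /attach plb; congr node.
rewrite !sdep_par // plb /root_or_lb (negbTE ur) (negbTE nlb) (negbTE lbr) islb /=; lia.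
Qed.

Lemma par'_lastborn' x : vertex' x -> fresh <= x -> x != root' -> lastborn' (par' x) = x.
Proof.
case: (labelP x) => [xlt _ | c i ltis ->]; first by rewrite leqNgt xlt.
rewrite vertex'_node // par'_node // => + _.
case: c => [_ | g /andP[gG ltgi]] ne.
  have i0 : i != 0 by apply: contraNneq ne => ->.
  by rewrite lastborn'_node; [congr node; lia | lia].
case: eqP => [-> | nei]; first by rewrite /lastborn' G_lt_fresh.
by rewrite lastborn'_node; [congr node; lia | lia].
Qed.

Lemma depth'_lt_span x : vertex' x -> depth' x < span.
Proof.
case: (labelP x) => [xlt | c i ltis ->]; last by rewrite depth'_node.
move=> vx; have xG : inG x by move: vx; rewrite /vertex' xlt.
by rewrite depth'_G //; move: (sdep_lt_span (G_mem xG)); lia.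
Qed.

Lemma lastborn'_child v w : vertex' v -> vertex' w -> w != root' -> par' w = v ->
  [/\ vertex' (lastborn' v), lastborn' v != root' & par' (lastborn' v) = v].
Proof.
move=> vv vw wr pwv.
have ltvs : (depth' v).+1 < span.
  have [_ dv] := par'_step vw wr; move: (depth'0 vw) (depth'_lt_span vw).
  by rewrite pwv in dv; rewrite dv (negbTE wr); lia.
case: (labelP v) vv ltvs => [vlt | c i ltis ->].
  move=> vv; have vG : inG v by move: vv; rewrite /vertex' vlt.
  rewrite depth'_G // /lastborn' vlt => lts.
  by rewrite vertex'_node // par'_node // vG eqxx ltnSn /root' node_inj ?(ltnW span_gt1).
rewrite vertex'_node // depth'_node // lastborn'_node // => vv lts.
rewrite vertex'_node // par'_node // /root' node_inj ?(ltnW span_gt1) // andbF.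
by case: c vv => [//|g /andP[gG ltgi]]; rewrite gG ifN_eq //=; [split=> //; lia | lia].
Qed.

Lemma lastborn'_ge x : fresh <= lastborn' x.
Proof. by rewrite /lastborn'; case: ifP => _; rewrite /node leq_addr. Qed.

Lemma old_not_root_lastborn' x : x < fresh -> ~~ ((x == root') || is_last_born T' x).
Proof.
move=> xlt; apply/norP; split; first by apply: contraTneq xlt => ->; rewrite node_lt.
by apply/negP => /and3P[_ _ /eqP ex]; move: xlt; rewrite ex /= ltnNge lastborn'_ge.
Qed.

Lemma G_iff_not_root_lastborn' v : vertex' v -> inG v <-> ~~ ((v == root') || is_last_born T' v).
Proof.
case: (labelP v) => [vlt | c i ltis ->] vv.
  by move: vv; rewrite /vertex' vlt => vG; split=> // _; exact: old_not_root_lastborn'.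
have -> : inG (node c i) = false by apply: contraFF (node_lt c i) => /G_lt_fresh.
split=> //; have [//|ne] := eqVneq (node c i) root'.
by rewrite /is_last_born /= mem_verts' vv ne par'_lastborn' ?eqxx // /node leq_addr.
Qed.

Lemma mem_out_nbrs u w : (w \in out_nbrs u) = garc G u w.
Proof. by rewrite mem_filter; apply: andb_idr => /arcP[]. Qed.

Lemma mem_c' u x : (x \in c' u) =
  [&& vertex' x, lastborn' (par' u) \in anc' x & has (fun w => x \in anc' w) (out_nbrs u)].
Proof. by rewrite mem_filter mem_verts' andbC. Qed.

Lemma deepest_out_nbr u w : garc G u w ->
  exists2 t, garc G u t & forall v, garc G u v -> v \in anc t.
Proof.
move=> uw; have [_ _ [s [br arcs]]] := out_branch uw.
have [|t ut maxt] := exists_argmax_seq dep (s := out_nbrs u).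
  by apply/eqP => no_nbrs; move: uw; rewrite -mem_out_nbrs no_nbrs.
rewrite mem_out_nbrs in ut; exists t => // v uv.
have [_ vs] := (arcs v).1 uv; have [_ ts] := (arcs t).1 ut.
move: (vs) (ts); rewrite !(mem_branch dT br) => /andP[vz _] /andP[tz _].
have [zV _ _] := branch_traject dT br.
by apply: (ancestors_total dT zV tz vz); apply: maxt; rewrite mem_out_nbrs.
Qed.

Lemma c'_branch u w : garc G u w ->
  exists s, is_branch T' (lastborn' (par' u) :: s) /\ c' u =i lastborn' (par' u) :: s.
Proof.
move=> uw; have [uG _ _] := (arcP u w).1 uw; have [ur nlb _] := out_branch uw.
have [t ut deepest] := deepest_out_nbr uw; have [_ tG _] := (arcP u t).1 ut.
have tV' : t \in bvert T' by rewrite mem_verts' vertex'_G.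
have [_ lbr _ _] := last_born_par hT (G_mem uG) ur.
set a := lastborn' (par' u).
have ta : a \in anc' t.
  by rewrite /a lastborn'_par'_G //; apply: anc'_attach tG (arc_lb_ancestor ut) lbr.
have [_ lat eat] := ancestorP dT' tV' ta.
set k := depth' t - depth' a.
have e : rev (traject par' t k.+1) = a :: rev (traject par' t k).
  by rewrite trajectSr rev_rcons eat.
exists (rev (traject par' t k)); rewrite -e.
split=> [|x]; first by apply: (traject_branch dT' tV'); apply: leq_subr.
rewrite mem_rev (mem_traject_par dT' tV' (leq_subr _ _)) subKn // mem_c'.
apply/and3P/andP => [[_ ax /hasP[v uv xv]] | [xt lax]].
  rewrite mem_out_nbrs in uv; have [_ vG _] := (arcP u v).1 uv.
  have xt := ancestors_trans dT' tV' (anc'_G tG vG (deepest v uv)) xv.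
  have [xV' _ _] := ancestorP dT' tV' xt.
  by split=> //; case: (ancestorP dT' xV' ax).
have [xV' _ _] := ancestorP dT' tV' xt.
split; [by rewrite -mem_verts' | by apply: (ancestors_total dT' tV') |].
by apply/hasP; exists t; rewrite ?mem_out_nbrs.
Qed.

Lemma burling_T' : burling_tree T'.
Proof.
split.
- by apply: rooted_tree_depth dT' _; rewrite mem_verts' vertex'_node ?(ltnW span_gt1).
- move=> v vv nl; have {}vv : vertex' v by rewrite -mem_verts'.
  have [w] : exists w, w \in children T' v.
    by move: nl; rewrite /is_leaf; case: (children T' v) => // w ws _; exists w; rewrite mem_head.
  rewrite mem_filter mem_verts' => /andP[/andP[wr /eqP pwv] vw].
  have [vl lr pl] := lastborn'_child vv vw wr pwv.
  by rewrite mem_filter mem_verts' /= vl lr pl eqxx.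
move=> v vv; have {}vv : vertex' v by rewrite -mem_verts'.
case E: (out_nbrs v) => [|w ws].
  have c0 : c' v =i [::] by move=> x; rewrite mem_c' E /= !andbF.
  by case: ifP => _ //; exists [::].
have vw : garc G v w by rewrite -mem_out_nbrs E mem_head.
have [vG _ _] := (arcP v w).1 vw.
rewrite (negbTE (old_not_root_lastborn' (G_lt_fresh vG))).
have [s [br e]] := c'_branch vw.
by exists (lastborn' (par' v) :: s).
Qed.

Lemma c'_arc u v : garc G u v -> v \in c' u.
Proof.
move=> uv; have [uG vG _] := (arcP u v).1 uv; have [ur nlb _] := out_branch uv.
have [_ lbr _ _] := last_born_par hT (G_mem uG) ur.
rewrite mem_c' vertex'_G //= lastborn'_par'_G //; apply/andP; split.
  exact: anc'_attach vG (arc_lb_ancestor uv) lbr.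
by apply/hasP; exists v; rewrite ?mem_out_nbrs ?ancestors_self.
Qed.

Lemma arc_c' u v : inG u -> inG v -> v \in c' u -> garc G u v.
Proof.
rewrite mem_c' => uG vG /and3P[_ av /hasP[w]].
rewrite mem_out_nbrs => uw vw; have [_ wG _] := (arcP u w).1 uw.
have [ur nlb [s [br arcs]]] := out_branch uw.
have [lbV lbr _ islb] := last_born_par hT (G_mem uG) ur.
apply/arcs; split=> //; rewrite (mem_branch dT br); apply/andP; split.
  have [_] := (arcs w).1 uw; rewrite (mem_branch dT br) => /andP[wz _].
  have [zV _ _] := branch_traject dT br.
  by apply: (ancestors_trans dT zV wz); exact: anc'_anc.
have vV' : v \in bvert T' by rewrite mem_verts' vertex'_G.
move: av; rewrite lastborn'_par'_G // => /(ancestorP dT' vV')[_ + _].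
rewrite (vertex'_attach lbV lbr).2 depth'_G // {1}/sdep /root_or_lb islb orbT.
by move: (sdep_bounds v); lia.
Qed.

Lemma derived_T' : derived_from G T'.
Proof.
split=> [x xG | u v]; first by rewrite mem_verts' vertex'_G.
rewrite /full_arc !mem_verts'; split=> [uv | [uG vG /and3P[_ _]]]; last exact: arc_c'.
by have [uG vG _] := (arcP u v).1 uv; rewrite !vertex'_G // c'_arc.
Qed.

Lemma arc_sdep_leq u v w : garc G u v -> garc G u w -> (dep v <= dep w) = (sdep v <= sdep w).
Proof.
move=> uv uw; have [_ _ [s [br arcs]]] := out_branch uv.
have [_ vs] := (arcs v).1 uv; have [_ ws] := (arcs w).1 uw.
have [e | ne] := eqVneq (dep v) (dep w); first by rewrite (mem_branch_inj dT br vs ws e) !leqnn.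
by move: (sdep_bounds v) (sdep_bounds w) ne; lia.
Qed.

Lemma top_bottom_T' u v : garc G u v ->
  (top_arc G T u v <-> top_arc G T' u v) /\ (bottom_arc G T u v <-> bottom_arc G T' u v).
Proof.
move=> uv; rewrite (top_arcE dT hG) (top_arcE dT' derived_T').
rewrite (bottom_arcE dT hG) (bottom_arcE dT' derived_T').
have depth'_arc w : garc G u w -> depth' w = sdep w by case/arcP => _ wG _; apply: depth'_G.
split; split=> -[_ ext]; split=> // w uw; move: (ext w uw);
  by rewrite !depth'_arc // ?(arc_sdep_leq uv uw) ?(arc_sdep_leq uw uv).
Qed.

End Construction.

Theorem lemma3p5 (T : btree) (G : ograph) :
  burling_tree T -> derived_from G T ->
  exists T' : btree,
    [/\ burling_tree T', derived_from G T',
        (forall v, v \in bvert T' ->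
           (v \in gvert G <-> ~~ ((v == broot T') || is_last_born T' v))) &
        (forall u v, garc G u v ->
           (top_arc G T u v <-> top_arc G T' u v) /\
           (bottom_arc G T u v <-> bottom_arc G T' u v))].
Proof.
move=> hT hG; exists (T' G hT); split.
- exact: burling_T'.
- exact: derived_T'.
- by move=> v vv; apply: (G_iff_not_root_lastborn' hG); rewrite -mem_verts'.
- exact: top_bottom_T'.
Qed.
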